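(* Let $\Sigma_1,\Sigma_2$ be alphabets with $\Sigma_1\subset\Sigma_2$. If $\varphi_1:\Sigma_1^+\to\Sigma_1^+$ is a reducible Parikh-positive morphism, then there exists a reducible Parikh-positive morphism $\varphi_2:\Sigma_2^+\to\Sigma_2^+$ such that $\varphi_2(a_i)=\varphi_1(a_i)$ for all $a_i\in\Sigma_1$ and $\varphi_2(a_j)=a_j$ for all $a_j\in\Sigma_2\setminus\Sigma_1$.
   Context: A morphism $\varphi:\Sigma^+\to\Sigma^+$ with $\Sigma=\{a_1,\dots,a_n\}$ satisfies $\varphi(uv)=\varphi(u)\varphi(v)$ (non-empty images); it is Parikh-positive if every letter of $\Sigma$ occurs in $\varphi(a_1)\cdots\varphi(a_n)$. An automorphism is an injective morphism mapping each letter to a single letter. A morphism $\varphi:\Sigma^+\to\Sigma^+$ is reducible if it equals $\psi_2\circ\psi_1$ for morphisms $\psi_1,\psi_2:\Sigma^+\to\Sigma^+$ neither of which is an automorphism. *)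

From mathcomp Require Import all_boot.
Set Implicit Arguments. Unset Strict Implicit. Unset Printing Implicit Defensive.

(* A morphism Sigma^+ -> Sigma^+ is determined by the images of the letters:
   f : T -> seq T with every image non-empty. *)
Section Morphisms.
Variable T : finType.

Definition is_morph (f : T -> seq T) : Prop := forall a, f a <> [::].

Definition mapply (f : T -> seq T) (w : seq T) : seq T := flatten (map f w).

Definition mcomp (g f : T -> seq T) : T -> seq T := fun a => mapply g (f a).

Definition automorphism (f : T -> seq T) : Prop :=
  is_morph f /\ (forall a, size (f a) = 1) /\
  (forall u v : seq T, u <> [::] -> v <> [::] -> mapply f u = mapply f v -> u = v).

Definition parikh_positive (f : T -> seq T) : Prop :=
  forall b : T, b \in mapply f (enum T).

Definition reducible (f : T -> seq T) : Prop :=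
  exists psi1 psi2 : T -> seq T,
    [/\ is_morph psi1, is_morph psi2, ~ automorphism psi1, ~ automorphism psi2
      & forall a, f a = mcomp psi2 psi1 a].
End Morphisms.

From mathcomp Require Import all_boot.

Set Implicit Arguments. Unset Strict Implicit. Unset Printing Implicit Defensive.

(* Extend a morphism of the subalphabet by the identity on the new letters.
   On words over the subalphabet the extension is the original morphism
   followed by the injective letter embedding [val], so extension commutes
   with composition and an extension is an automorphism only if the original
   morphism is one; a reducible decomposition therefore extends to one of the
   extended morphism. Parikh-positivity holds because old letters occur in the
   images of old letters and each new letter is its own image. *)

Lemma mapplyP (T : finType) (f : T -> seq T) (w : seq T) (b : T) :
  reflect (exists2 a, a \in w & b \in f a) (b \in mapply f w).
Proof.
apply: (iffP flattenP) => [[_ /mapP[a wa ->]] fab | [a wa fab]].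
  by exists a.
by exists (f a); first exact: map_f.
Qed.

Section ExtendById.
Variables (T : finType) (P : pred T) (sT : subFinType P).

Definition extend (f : sT -> seq sT) (a : T) : seq T :=
  if insub a is Some x then map val (f x) else [:: a].

Lemma extend_val f (x : sT) : extend f (val x) = map val (f x).
Proof. by rewrite /extend valK. Qed.

Lemma extend_out f a : ~~ P a -> extend f a = [:: a].
Proof. by move=> Pa; rewrite /extend insubN. Qed.

Lemma mapply_extend f w : mapply (extend f) (map val w) = map val (mapply f w).
Proof.
by elim: w => //= x w IHw; rewrite /mapply /= map_cat -IHw extend_val.
Qed.

Lemma mcomp_extend g f : mcomp (extend g) (extend f) =1 extend (mcomp g f).
Proof.
move=> a; rewrite /mcomp; case: (insubP sT a) => [x _ <- | Pa].
  by rewrite !extend_val mapply_extend.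
by rewrite !extend_out // /mapply /= cats0 extend_out.
Qed.

Lemma extend_morph f : is_morph f -> is_morph (extend f).
Proof.
move=> f_morph a; case: (insubP sT a) => [x _ <- | Pa].
  by rewrite extend_val; case: (f x) (f_morph x).
by rewrite extend_out.
Qed.

Lemma extend_automorphism f : automorphism (extend f) -> automorphism f.
Proof.
have val_nil (u : seq sT) : u <> [::] -> map val u <> [::] by case: u.
move=> [ext_morph [ext_size ext_inj]]; split; last split.
- by move=> x; have := ext_morph (val x); rewrite extend_val; case: (f x).
- by move=> x; have := ext_size (val x); rewrite extend_val size_map.
move=> u v u0 v0 fuv; apply: (inj_map val_inj).
by apply: ext_inj; rewrite ?mapply_extend ?fuv //; apply: val_nil.
Qed.

Lemma extend_reducible f : reducible f -> reducible (extend f).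
Proof.
move=> [psi1 [psi2 [m1 m2 na1 na2 f_comp]]].
exists (extend psi1), (extend psi2); split; try exact: extend_morph.
- by move/extend_automorphism.
- by move/extend_automorphism.
move=> a; rewrite mcomp_extend /extend; case: insub => //= x.
by rewrite f_comp.
Qed.

Lemma extend_parikh_positive f : parikh_positive f -> parikh_positive (extend f).
Proof.
move=> f_pos b; case: (insubP sT b) => [y _ <- | Pb].
  have /mapplyP[x _ fxy] := f_pos y.
  by apply/mapplyP; exists (val x); rewrite ?mem_enum // extend_val map_f.
by apply/mapplyP; exists b; rewrite ?mem_enum // extend_out ?mem_seq1.
Qed.

End ExtendById.

Theorem proposition10 (Sigma2 : finType) (Sigma1 : {set Sigma2})
    (phi1 : {x : Sigma2 | x \in Sigma1} -> seq {x : Sigma2 | x \in Sigma1}) :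
  is_morph phi1 -> reducible phi1 -> parikh_positive phi1 ->
  exists phi2 : Sigma2 -> seq Sigma2,
    [/\ is_morph phi2, reducible phi2, parikh_positive phi2,
        (forall (a : Sigma2) (Ha : a \in Sigma1), phi2 a = map val (phi1 (exist _ a Ha)))
      & (forall a : Sigma2, a \notin Sigma1 -> phi2 a = [:: a])].
Proof.
move=> phi1_morph phi1_red phi1_pos; exists (extend phi1); split.
- exact: extend_morph.
- exact: extend_reducible.
- exact: extend_parikh_positive.
- by move=> a Ha; apply: (extend_val phi1 (exist _ a Ha)).
- exact: extend_out.
Qed.
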